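(* Let $S$ be a left I-order in an inverse semigroup $Q$. Then $S$ is straight in $Q$ if and only if $S$ intersects every $\mathcal{L}$-class of $Q$.
   Context: For an element $a$ of an inverse semigroup $Q$, $a^{-1}$ is its unique inverse. A subsemigroup $S$ of $Q$ is a left I-order in $Q$ if every $q\in Q$ can be written $q=a^{-1}b$ with $a,b\in S$; it is straight in $Q$ if $a,b$ can always be chosen with $a\,\mathcal{R}\,b$ in $Q$. $\mathcal{L},\mathcal{R}$ are Green's relations of $Q$. *)

Definition associative_op {T : Type} (mul : T -> T -> T) : Prop :=
  forall x y z, mul x (mul y z) = mul (mul x y) z.

Definition is_inverse_of {T : Type} (mul : T -> T -> T) (a b : T) : Prop :=
  mul (mul a b) a = a /\ mul (mul b a) b = b.

Definition inverse_semigroup {T : Type} (mul : T -> T -> T) : Prop :=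
  associative_op mul /\ forall a, exists! b, is_inverse_of mul a b.

(* Green's relations, via principal one-sided ideals Q^1 a. *)
Definition in_left_ideal {T : Type} (mul : T -> T -> T) (a b : T) : Prop :=
  a = b \/ exists x, a = mul x b.
Definition in_right_ideal {T : Type} (mul : T -> T -> T) (a b : T) : Prop :=
  a = b \/ exists x, a = mul b x.

Definition green_L {T : Type} (mul : T -> T -> T) (a b : T) : Prop :=
  in_left_ideal mul a b /\ in_left_ideal mul b a.
Definition green_R {T : Type} (mul : T -> T -> T) (a b : T) : Prop :=
  in_right_ideal mul a b /\ in_right_ideal mul b a.

Definition subsemigroup {T : Type} (mul : T -> T -> T) (S : T -> Prop) : Prop :=
  forall a b, S a -> S b -> S (mul a b).

(* Left I-order: every q is a^{-1} b with a, b in S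
   (a' is "the" inverse of a, unique in an inverse semigroup). *)
Definition left_I_order {T : Type} (mul : T -> T -> T) (S : T -> Prop) : Prop :=
  subsemigroup mul S /\
  forall q, exists a b a', S a /\ S b /\ is_inverse_of mul a a' /\ q = mul a' b.

Definition straight_left_I_order {T : Type} (mul : T -> T -> T) (S : T -> Prop) : Prop :=
  forall q, exists a b a', S a /\ S b /\ is_inverse_of mul a a' /\
    green_R mul a b /\ q = mul a' b.

Definition meets_every_L_class {T : Type} (mul : T -> T -> T) (S : T -> Prop) : Prop :=
  forall q, exists s, S s /\ green_L mul s q.

(* In an inverse semigroup idempotents commute and (x c)^-1 = c^-1 x^-1.
   If q = a^-1 b with a R b, then b = a a^-1 b = a q, so b lies in S and in
   the L-class of q.  Conversely, write q = c^-1 d with c, d in S and pick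
   x in S that is L-related to the idempotent e = c c^-1 d d^-1, so that
   x^-1 x = e.  Then x c and x d lie in S, are R-related (both have range
   x x^-1), and (x c)^-1 (x d) = c^-1 e d = c^-1 d = q. *)

From Stdlib Require Import Setoid.

Section InverseSemigroup.

Variable T : Type.
Variable mul : T -> T -> T.
Hypothesis HQ : inverse_semigroup mul.
Local Infix "*" := mul.

Lemma mulA x y z : x * (y * z) = x * y * z.
Proof. exact (proj1 HQ x y z). Qed.

Ltac reassoc := repeat rewrite <- mulA; reflexivity.
Ltac regroup t := transitivity t; [reassoc |].

Lemma inverse_exists a : exists a', is_inverse_of mul a a'.
Proof. destruct (proj2 HQ a) as [a' [Ha _]]. now exists a'. Qed.

Lemma inverse_unique a b c :
  is_inverse_of mul a b -> is_inverse_of mul a c -> b = c.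
Proof.
  intros Hb Hc. destruct (proj2 HQ a) as [a' [_ U]].
  now rewrite <- (U _ Hb), <- (U _ Hc).
Qed.

Lemma inverse_sym a b : is_inverse_of mul a b -> is_inverse_of mul b a.
Proof. now intros [H1 H2]. Qed.

Definition idempotent (e : T) : Prop := e * e = e.

Lemma idempotent_self_inverse e : idempotent e -> is_inverse_of mul e e.
Proof. intros He. unfold idempotent in He. split; now rewrite !He. Qed.

Lemma idempotent_mul_inverse a a' :
  is_inverse_of mul a a' -> idempotent (a * a').
Proof. intros [Ha _]. unfold idempotent. regroup (a * a' * a * a'). now rewrite Ha. Qed.

Lemma idempotent_inverse_mul a a' :
  is_inverse_of mul a a' -> idempotent (a' * a).
Proof. intros Ha. exact (idempotent_mul_inverse _ _ (inverse_sym _ _ Ha)). Qed.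

Lemma idempotent_mul e f : idempotent e -> idempotent f -> idempotent (e * f).
Proof.
  unfold idempotent. intros He Hf.
  destruct (inverse_exists (e * f)) as [x Hx]. pose proof Hx as [Hx1 Hx2].
  (* f x e is also an inverse of e f, hence equals x; this forces x x = x. *)
  assert (Hfxe : is_inverse_of mul (e * f) (f * (x * e))).
  { split.
    - regroup (e * (f * f) * (x * (e * e) * f)). rewrite He, Hf.
      regroup (e * f * x * (e * f)). exact Hx1.
    - regroup (f * (x * (e * e) * (f * f) * x) * e). rewrite He, Hf.
      regroup (f * (x * (e * f) * x) * e). rewrite Hx2. reassoc. }
  assert (Hx_eq : x = f * (x * e)) by exact (inverse_unique _ _ _ Hx Hfxe).
  assert (Hxx : idempotent x).
  { unfold idempotent. rewrite Hx_eq at 1 2.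
    regroup (f * (x * (e * f) * x) * e). rewrite Hx2, <- mulA. symmetry. exact Hx_eq. }
  assert (Hef : e * f = x).
  { exact (inverse_unique _ _ _ (inverse_sym _ _ Hx) (idempotent_self_inverse _ Hxx)). }
  now rewrite Hef.
Qed.

Lemma idempotent_comm e f : idempotent e -> idempotent f -> e * f = f * e.
Proof.
  intros He Hf. pose proof (idempotent_mul _ _ He Hf) as Hef.
  pose proof (idempotent_mul _ _ Hf He) as Hfe.
  unfold idempotent in *.
  apply (inverse_unique (e * f)); [now apply idempotent_self_inverse |]. split.
  - regroup (e * (f * f) * (e * e) * f). rewrite He, Hf.
    regroup ((e * f) * (e * f)). exact Hef.
  - regroup (f * (e * e) * (f * f) * e). rewrite He, Hf.
    regroup ((f * e) * (f * e)). exact Hfe.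
Qed.

Lemma idempotent_mul_absorb e f : idempotent e -> idempotent f -> e * f * e = e * f.
Proof.
  intros He Hf. regroup (e * (f * e)). rewrite <- (idempotent_comm _ _ He Hf).
  regroup (e * e * f). now rewrite He.
Qed.

Lemma inverse_mul x x' c c' :
  is_inverse_of mul x x' -> is_inverse_of mul c c' ->
  is_inverse_of mul (x * c) (c' * x').
Proof.
  intros Hx Hc.
  pose proof (idempotent_comm _ _ (idempotent_mul_inverse _ _ Hc)
                (idempotent_inverse_mul _ _ Hx)) as Hcomm.
  destruct Hx as [Hx1 Hx2], Hc as [Hc1 Hc2]. split.
  - regroup (x * ((c * c') * (x' * x)) * c). rewrite Hcomm.
    regroup ((x * x' * x) * (c * c' * c)). now rewrite Hx1, Hc1.
  - regroup (c' * ((x' * x) * (c * c')) * x'). rewrite <- Hcomm.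
    regroup ((c' * c * c') * (x' * x * x')). now rewrite Hx2, Hc2.
Qed.

Lemma in_left_ideal_absorb a a' b :
  is_inverse_of mul a a' -> in_left_ideal mul b a -> b * (a' * a) = b.
Proof.
  intros [Ha _] [-> | [u ->]].
  - now rewrite mulA.
  - regroup (u * (a * a' * a)). now rewrite Ha.
Qed.

Lemma in_right_ideal_absorb a a' b :
  is_inverse_of mul a a' -> in_right_ideal mul b a -> a * a' * b = b.
Proof.
  intros [Ha _] [-> | [z ->]].
  - exact Ha.
  - now rewrite mulA, Ha.
Qed.

Lemma green_R_of_range_eq a a' b b' :
  is_inverse_of mul a a' -> is_inverse_of mul b b' -> a * a' = b * b' ->
  green_R mul a b.
Proof.
  intros [Ha _] [Hb _] E. split; right.
  - exists (b' * a). now rewrite mulA, <- E, Ha.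
  - exists (a' * b). now rewrite mulA, E, Hb.
Qed.

Lemma green_L_idempotent x x' e :
  is_inverse_of mul x x' -> idempotent e -> green_L mul x e -> x' * x = e.
Proof.
  intros Hx He [Hxe Hex].
  assert (Hxe' : x * e = x).
  { pose proof (in_left_ideal_absorb _ _ _ (idempotent_self_inverse _ He) Hxe) as H.
    unfold idempotent in He. now rewrite He in H. }
  pose proof (in_left_ideal_absorb _ _ _ Hx Hex) as Hex'.
  rewrite <- Hxe', mulA, idempotent_comm;
    [exact Hex' | exact (idempotent_inverse_mul _ _ Hx) | exact He].
Qed.

Lemma straighten c c' d d' x x' :
  is_inverse_of mul c c' -> is_inverse_of mul d d' -> is_inverse_of mul x x' ->
  x' * x = c * c' * (d * d') ->
  green_R mul (x * c) (x * d) /\ c' * x' * (x * d) = c' * d.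
Proof.
  intros Hc Hd Hx E.
  pose proof (idempotent_mul_inverse _ _ Hc) as Hcc.
  pose proof (idempotent_mul_inverse _ _ Hd) as Hdd.
  assert (Hxe : x * (c * c' * (d * d')) = x) by (rewrite <- E, mulA; apply Hx).
  assert (Hxc : x * (c * c') = x).
  { rewrite <- Hxe at 1. regroup (x * (c * c' * (d * d') * (c * c'))).
    rewrite (idempotent_mul_absorb _ _ Hcc Hdd). exact Hxe. }
  assert (Hxd : x * (d * d') = x).
  { rewrite <- Hxe at 1. regroup (x * (c * c' * ((d * d') * (d * d')))).
    rewrite Hdd. exact Hxe. }
  split.
  - apply (green_R_of_range_eq _ (c' * x') _ (d' * x'));
      [now apply inverse_mul | now apply inverse_mul |].
    regroup (x * (c * c') * x'). rewrite Hxc.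
    symmetry. regroup (x * (d * d') * x'). now rewrite Hxd.
  - destruct Hc as [_ Hc2], Hd as [Hd1 _].
    regroup (c' * (x' * x) * d). rewrite E.
    regroup ((c' * c * c') * (d * d' * d)). now rewrite Hc2, Hd1.
Qed.

Variable S : T -> Prop.

Lemma straight_meets_every_L_class :
  straight_left_I_order mul S -> meets_every_L_class mul S.
Proof.
  intros Hst q. destruct (Hst q) as [a [b [a' [_ [Sb [Ha [[_ Hba] Hq]]]]]]].
  exists b. split; [exact Sb |]. split; right.
  - exists a. rewrite Hq, mulA. symmetry. exact (in_right_ideal_absorb _ _ _ Ha Hba).
  - exists a'. exact Hq.
Qed.

Lemma meets_every_L_class_straight :
  left_I_order mul S -> meets_every_L_class mul S -> straight_left_I_order mul S.
Proof.
  intros [HSmul HSq] HL q.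
  destruct (HSq q) as [c [d [c' [Sc [Sd [Hc Hq]]]]]].
  destruct (inverse_exists d) as [d' Hd].
  pose proof (idempotent_mul _ _ (idempotent_mul_inverse _ _ Hc)
                (idempotent_mul_inverse _ _ Hd)) as He.
  destruct (HL (c * c' * (d * d'))) as [x [Sx HxL]].
  destruct (inverse_exists x) as [x' Hx].
  destruct (straighten _ _ _ _ _ _ Hc Hd Hx (green_L_idempotent _ _ _ Hx He HxL))
    as [HR Hq'].
  exists (x * c), (x * d), (c' * x').
  split; [now apply HSmul |]. split; [now apply HSmul |].
  split; [now apply inverse_mul |]. split; [exact HR |].
  now rewrite Hq'.
Qed.

End InverseSemigroup.

Theorem lemma2p1 (Q : Type) (mul : Q -> Q -> Q) (S : Q -> Prop)
  (HQ : inverse_semigroup mul) (HS : left_I_order mul S) :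
  straight_left_I_order mul S <-> meets_every_L_class mul S.
Proof.
  split.
  - exact (straight_meets_every_L_class Q mul HQ S).
  - exact (meets_every_L_class_straight Q mul HQ S HS).
Qed.
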